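(* Let $G_1$ and $G_2$ be connected graphs on disjoint vertex sets, let $v_1\in V(G_1)$, $v_2\in V(G_2)$, and let $G$ be the graph with $V(G)=V(G_1)\cup V(G_2)$ and $E(G)=E(G_1)\cup E(G_2)\cup\{v_1v_2\}$. Then \[ \operatorname{cdim}(G)=\begin{cases}\operatorname{cdim}(G_1)+\operatorname{cdim}(G_2)+1 & \text{if both } G_1 \text{ and } G_2 \text{ force an all-ones representation},\\ \operatorname{cdim}(G_1)+\operatorname{cdim}(G_2) & \text{otherwise.}\end{cases} \]
   Context: All graphs are finite, simple, undirected and nonempty. For distinct vertices $v,w$ of a graph $G$, $\kappa_G(v,w)$ is the maximum number of internally vertex-disjoint $v$–$w$ paths in $G$ (an edge $vw$ counts as one such path); $\kappa_G(v,v)=\infty$. For an ordered vertex set $W=(w_1,\ldots,w_k)$, $r_G(v,W)=[\kappa_G(v,w_1),\ldots,\kappa_G(v,w_k)]$. $W$ is resolving for $G$ if $r_G(v_1,W)=r_G(v_2,W)$ implies $v_1=v_2$. A (connectivity) basis is a resolving set of minimum cardinality, and $\operatorname{cdim}(G)$ is its cardinality. A graph $G$ forces an all-ones representation if for every basis $B$ of $G$ there is a vertex $v\in V(G)$ with $r_G(v,B)=[1,\ldots,1]$ (all entries equal to $1$). In particular the one-vertex graph $K_1$, whose only basis is $\emptyset$ and whose vertex has the empty representation vector (vacuously all ones), forces an all-ones representation. *)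

From Stdlib Require Import ClassicalEpsilon.
From mathcomp Require Import all_boot.
Set Implicit Arguments. Unset Strict Implicit. Unset Printing Implicit Defensive.

Definition pb (P : Prop) : bool :=
  if excluded_middle_informative P then true else false.
Lemma pbP (P : Prop) : reflect P (pb P).
Proof. by rewrite /pb; case: excluded_middle_informative => h; constructor. Qed.

Section Graphs.
Variable T : finType.

Definition simple_graph (e : rel T) := symmetric e /\ irreflexive e.
Definition connected_graph (e : rel T) := forall x y : T, connect e x y.

(* A v-w path: the vertex sequence v :: p, consecutive vertices adjacent,
   ending in w, all vertices distinct. The edge vw is the path [:: w]. *)
Definition vw_path (e : rel T) (v w : T) (p : seq T) : bool :=
  [&& path e v p, last v p == w & uniq (v :: p)].

(* Internal vertices of the path v :: p ending in w are the x in p with x != w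
   (v does not occur in p by uniqueness). Two paths are internally disjoint
   when they share no internal vertex. *)
Definition int_disjoint (w : T) (p q : seq T) : Prop :=
  forall x, x \in p -> x \in q -> x = w.

Definition idp_family (e : rel T) (v w : T) (s : seq (seq T)) : Prop :=
  [/\ uniq s, all (vw_path e v w) s &
      {in s &, forall p q, p != q -> int_disjoint w p q}].

Definition has_idp (e : rel T) (v w : T) (k : nat) : Prop :=
  exists s, idp_family e v w s /\ size s = k.

Lemma has_idp0 e v w : exists k, pb (has_idp e v w k).
Proof.
exists 0; apply/pbP; exists [::]; split => //; split => //.
Qed.

Lemma idp_family_size e v w s : idp_family e v w s -> size s <= #|T|.
Proof.
case=> us /allP ps dis.
have inj : {in s &, injective (head v)}.
  move=> p q ps' qs' hpq.
  have uw (y : T) (r : seq T) : y :: r \in s -> y = w -> y :: r = [:: w].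
    move=> rs hr; move/ps: rs; rewrite hr.
    case/and3P => _ /eqP lw /andP [_ /andP [ynr _]].
    case: r lw ynr => [|z r] //= lw; rewrite -lw.
    by rewrite mem_last.
  case: p q hpq ps' qs' => [|y p] [|z q] //= hyz ps' qs'.
  - by move/ps: qs'; rewrite -hyz /vw_path /= inE eqxx /= !andbF.
  - by move/ps: ps'; rewrite hyz /vw_path /= inE eqxx /= !andbF.
  case: (eqVneq (y :: p) (z :: q)) => // neq.
  have hw : y = w by apply: (dis _ _ ps' qs' neq); rewrite ?inE ?hyz eqxx.
  by rewrite (uw _ _ ps' hw) (uw _ _ qs' (etrans (esym hyz) hw)).
have u : uniq (map (head v) s) by rewrite map_inj_in_uniq.
by rewrite -(size_map (head v)) -(card_uniqP u); apply: max_card.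
Qed.

Lemma has_idp_ub e v w k : pb (has_idp e v w k) -> k <= #|T|.
Proof. by move/pbP => [s [fs <-]]; apply: idp_family_size fs. Qed.

Definition kappa (e : rel T) (v w : T) : nat :=
  ex_maxn (@has_idp0 e v w) (@has_idp_ub e v w).

(* Extended value: None stands for infinity (kappa_G(v,v) = oo). *)
Definition kappa_ext (e : rel T) (v w : T) : option nat :=
  if v == w then None else Some (kappa e v w).

Definition rep (e : rel T) (v : T) (W : seq T) : seq (option nat) :=
  [seq kappa_ext e v w | w <- W].

Definition resolving (e : rel T) (W : seq T) : Prop :=
  uniq W /\ forall x y : T, rep e x W = rep e y W -> x = y.

Lemma resolving_enum e : resolving e (enum T).
Proof.
split; first exact: enum_uniq.
move=> x y /eq_in_map h; have := h x; rewrite mem_enum /kappa_ext eqxx.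
by move=> /(_ isT); case: (eqVneq y x) => [->|].
Qed.

Lemma has_resolving e : exists n, pb (exists W, resolving e W /\ size W = n).
Proof. by exists (size (enum T)); apply/pbP; exists (enum T); split => //; apply: resolving_enum. Qed.

Definition cdim (e : rel T) : nat := ex_minn (has_resolving e).

Definition basis (e : rel T) (B : seq T) : Prop :=
  resolving e B /\ size B = cdim e.

Definition forces_all_ones (e : rel T) : Prop :=
  forall B, basis e B -> exists v : T, rep e v B = nseq (size B) (Some 1).

End Graphs.

Definition bridge_graph (T1 T2 : finType) (e1 : rel T1) (e2 : rel T2)
  (v1 : T1) (v2 : T2) : rel (T1 + T2) :=
  fun x y => match x, y with
  | inl a, inl b => e1 a b
  | inr a, inr b => e2 a b
  | inl a, inr b => (a == v1) && (b == v2)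
  | inr a, inl b => (a == v2) && (b == v1)
  end.

(* In the bridged graph G every path from one side to the other runs through the edge v1v2,
   so vertices on different sides have connectivity 1, while a simple path between two vertices
   of the same side never leaves it, so kappa_G agrees there with kappa of that side. Hence
   r_G(x, W) is r_{G_i}(x, W restricted to G_i) padded with ones. A resolving set of G therefore
   restricts to resolving sets of both sides, and resolving sets B1, B2 of the two sides together
   resolve G unless some x in G1 and y in G2 have all-ones representations with respect to B1 and
   B2, in which case x and y are confused. If both sides force an all-ones representation, a
   resolving set of size cdim(G1) + cdim(G2) would restrict to two bases and yield such a pair.
   Conversely, adding to a basis B1 its (unique) vertex with all-ones representation removes the
   obstruction at the cost of one vertex, as that vertex is at connectivity infinity from itself. *)

From Stdlib Require Import Classical.
From mathcomp Require Import all_boot zify.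
Set Implicit Arguments. Unset Strict Implicit. Unset Printing Implicit Defensive.

Section Connectivity.
Variables (T : finType) (e : rel T).

Lemma kappa_witness x y : has_idp e x y (kappa e x y).
Proof. by rewrite /kappa; case: ex_maxnP => k /pbP. Qed.

Lemma kappa_max x y k : has_idp e x y k -> k <= kappa e x y.
Proof. by rewrite /kappa; case: ex_maxnP => k' _ ub h; apply/ub/pbP. Qed.

Lemma kappa_connect x y : connect e x y -> 0 < kappa e x y.
Proof.
case/connectP => p pp ->; case: (shortenP pp) => p' pp' up' _.
apply: (kappa_max (k := 1)); exists [:: p']; split => //; split => //=.
- by rewrite /vw_path pp' eqxx up'.
- by move=> a b; rewrite !inE => /eqP -> /eqP ->; rewrite eqxx.
Qed.

Lemma cdim_le_size W : resolving e W -> cdim e <= size W.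
Proof. by rewrite /cdim; case: ex_minnP => m _ min rW; apply/min/pbP; exists W. Qed.

Lemma basis_exists : exists B, basis e B.
Proof. by rewrite /basis /cdim; case: ex_minnP => m /pbP [W rW] _; exists W. Qed.

Definition all_ones_rep (v : T) (W : seq T) : bool :=
  rep e v W == nseq (size W) (Some 1).

Lemma all_ones_rep_notin x W : all_ones_rep x W -> x \notin W.
Proof.
move=> /eqP hx; apply/negP => xW.
have : kappa_ext e x x \in rep e x W by apply: map_f.
by rewrite hx /kappa_ext eqxx => /nseqP [].
Qed.

Lemma resolving_all_ones_cons x0 W : resolving e W -> all_ones_rep x0 W ->
  resolving e (x0 :: W) /\ forall x, ~~ all_ones_rep x (x0 :: W).
Proof.
move=> [uW rW] hx0; split.
  split; first by rewrite /= all_ones_rep_notin.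
  by move=> x y [_ /rW].
move=> x; rewrite /all_ones_rep /= eqseq_cons; apply/andP => -[/eqP kx1 hx].
have xx0 : x = x0 by apply: rW; rewrite (eqP hx) (eqP hx0).
by move: kx1; rewrite xx0 /kappa_ext eqxx.
Qed.

Lemma exists_resolving_without_all_ones :
  exists W, [/\ resolving e W, size W <= (cdim e).+1 & forall x, ~~ all_ones_rep x W].
Proof.
have [B [rB sB]] := basis_exists.
case: (pickP [pred x | all_ones_rep x B]) => [x0 hx0|none].
  have [rB' none] := resolving_all_ones_cons rB hx0.
  by exists (x0 :: B); split => //; rewrite /= sB.
exists B; split => //; first by rewrite sB.
by move=> x; apply/negbT/none.
Qed.

Lemma not_forces_all_ones : ~ forces_all_ones e ->
  exists B, basis e B /\ forall x, ~~ all_ones_rep x B.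
Proof.
move=> nf; apply: NNPP => nB; apply: nf => B bB.
apply: NNPP => nx; apply: nB; exists B; split => // x.
by apply/negP => /eqP hx; apply: nx; exists x.
Qed.

End Connectivity.

Section CutEdge.
Variables (T : finType) (e : rel T) (S : pred T) (u u' : T).
Hypotheses (uS : S u) (u'S : ~~ S u').
Hypothesis cut_out : forall x y, e x y -> S x -> ~~ S y -> x = u /\ y = u'.
Hypothesis cut_in : forall x y, e x y -> ~~ S x -> S y -> x = u' /\ y = u.

Lemma path_out_avoiding_cut x p : ~~ S x -> u \notin p -> path e x p -> all (predC S) p.
Proof.
elim: p x => //= y p IH x Sx; rewrite inE negb_or => /andP[uy up] /andP[exy pp].
case Sy: (S y); first by have [_ yu] := cut_in exy Sx Sy; rewrite yu eqxx in uy.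
by rewrite (IH y) ?Sy.
Qed.

Lemma path_in_stays x p : S x -> uniq (x :: p) -> path e x p -> S (last x p) -> all S p.
Proof.
elim: p x => //= y p IH x Sx /andP[xp up] /andP[exy pp] Sl.
case Sy: (S y); first by rewrite (IH y).
have [xu yu'] := cut_out exy Sx (negbT Sy); subst x y.
have out : all (predC S) (u' :: p).
  by rewrite /= u'S (path_out_avoiding_cut u'S) //; move: xp; rewrite inE negb_or => /andP[].
by move: (allP out _ (mem_last u' p)); rewrite /= Sl.
Qed.

Lemma path_crosses_cut x p : S x -> path e x p -> ~~ S (last x p) ->
  u \in x :: p /\ u' \in p.
Proof.
elim: p x => [|y p IH] x Sx /=; first by rewrite Sx.
move=> /andP[exy pp] Sl; case Sy: (S y).
  by have [h1 h2] := IH y Sy pp Sl; rewrite inE h1 orbT inE h2 orbT.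
by have [-> ->] := cut_out exy Sx (negbT Sy); rewrite !inE !eqxx.
Qed.

Lemma cut_path_single p : path e u p -> last u p = u' -> uniq (u :: p) -> p = [:: u'].
Proof.
case: p => [|z p] /=; first by move=> _ uu'; move: u'S; rewrite -uu' uS.
move=> /andP[euz pp] lp /andP[up /andP[zp _]].
case Sz: (S z).
  have := path_crosses_cut Sz pp; rewrite lp => /(_ u'S) [uzp _].
  by rewrite uzp in up.
have [_ zu'] := cut_out euz uS (negbT Sz); subst z.
by case: p {pp up} lp zp => //= w p <-; rewrite mem_last.
Qed.

Lemma cut_paths_not_disjoint x y p q : S x -> ~~ S y ->
  vw_path e x y p -> vw_path e x y q -> p != q -> ~ int_disjoint y p q.
Proof.
move=> Sx Sy /and3P[pp /eqP lp up] /and3P[qp /eqP lq uq] pq dis.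
have := path_crosses_cut Sx pp; rewrite lp => /(_ Sy) [up1 up2].
have := path_crosses_cut Sx qp; rewrite lq => /(_ Sy) [uq1 uq2].
have u'y := dis _ up2 uq2; rewrite -u'y in lp lq dis.
case: (eqVneq x u) => [xu|xu]; last first.
  move: up1 uq1; rewrite !inE eq_sym (negbTE xu) /= => up1 uq1.
  by move: u'S; rewrite -(dis _ up1 uq1) uS.
subst x; move: pq.
by rewrite (cut_path_single pp lp up) (cut_path_single qp lq uq) eqxx.
Qed.

Lemma kappa_cut x y : S x -> ~~ S y -> connect e x y -> kappa e x y = 1.
Proof.
move=> Sx Sy cxy; apply/eqP; rewrite eqn_leq kappa_connect // andbT.
have [[|p [|q s]] [[us /allP ps dis] <-]] := kappa_witness e x y => //=.
have pin : p \in [:: p, q & s] by rewrite mem_head.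
have qin : q \in [:: p, q & s] by rewrite !inE eqxx orbT.
have pq : p != q by move: us; rewrite /= inE negb_or => /andP[/andP[]].
by case: (cut_paths_not_disjoint Sx Sy (ps _ pin) (ps _ qin) pq (dis _ _ pin qin pq)).
Qed.

End CutEdge.

Section InducedSubgraph.
Variables (T T' : finType) (e : rel T) (e' : rel T') (f : T' -> T) (g : T -> option T').
Hypotheses (fK : pcancel f g) (gK : ocancel g f).
Hypothesis e_f : forall x y, e (f x) (f y) = e' x y.
Hypothesis paths_stay : forall x p,
  g x -> uniq (x :: p) -> path e x p -> g (last x p) -> all [eta g] p.

Let f_inj : injective f := pcan_inj fK.

Lemma path_map_emb x p : path e (f x) (map f p) = path e' x p.
Proof. by elim: p x => //= y p IH x; rewrite e_f IH. Qed.

Lemma vw_path_map_emb a b p : vw_path e (f a) (f b) (map f p) = vw_path e' a b p.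
Proof.
by rewrite /vw_path path_map_emb last_map (inj_eq f_inj) -map_cons (map_inj_uniq f_inj).
Qed.

Lemma idp_family_map_emb a b s :
  idp_family e (f a) (f b) (map (map f) s) <-> idp_family e' a b s.
Proof.
have mapf_inj := inj_map f_inj.
rewrite /idp_family (map_inj_uniq mapf_inj) all_map (eq_all (@vw_path_map_emb a b)).
split=> -[us ps dis]; split=> //.
  move=> p q pin qin pq x xp xq; apply: f_inj.
  by apply: (dis (map f p) (map f q)); rewrite ?map_f ?(inj_eq mapf_inj).
move=> _ _ /mapP[p pin ->] /mapP[q qin ->] pq _ /mapP[x xp ->].
rewrite (mem_map f_inj) => xq.
have {}pq : p != q by apply: contra_neq pq => ->.
by rewrite (dis p q pin qin pq x xp xq).
Qed.

Lemma has_idp_emb a b k : has_idp e (f a) (f b) k <-> has_idp e' a b k.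
Proof.
split=> -[s [fam <-]].
  exists (map (pmap g) s); split; last by rewrite size_map.
  apply/(idp_family_map_emb a b); rewrite -map_comp map_id_in // => p pin /=.
  case: fam => _ /allP/(_ p pin)/and3P[pp /eqP lp up] _.
  rewrite (pmap_filter gK); apply/all_filterP/(paths_stay _ up pp); by rewrite ?lp fK.
by exists (map (map f) s); rewrite size_map; split=> //; apply/idp_family_map_emb.
Qed.

Lemma kappa_emb a b : kappa e (f a) (f b) = kappa e' a b.
Proof.
by apply/eqP; rewrite eqn_leq !kappa_max //; apply/has_idp_emb/kappa_witness.
Qed.

Lemma connect_emb a b : connect e' a b -> connect e (f a) (f b).
Proof.
by case/connectP => p pp ->; apply/connectP; exists (map f p); rewrite ?path_map_emb ?last_map.
Qed.

End InducedSubgraph.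

Definition left_of (A B : Type) (z : A + B) : option A := if z is inl a then Some a else None.
Definition right_of (A B : Type) (z : A + B) : option B := if z is inr b then Some b else None.
Definition lefts (A B : Type) : seq (A + B) -> seq A := pmap (@left_of A B).
Definition rights (A B : Type) : seq (A + B) -> seq B := pmap (@right_of A B).

Lemma size_lefts_rights (A B : Type) (W : seq (A + B)) :
  size (lefts W) + size (rights W) = size W.
Proof. by elim: W => //= -[a|b] W IH; rewrite /= -IH ?addnS. Qed.

Lemma lefts_cat_map (A B : Type) (s1 : seq A) (s2 : seq B) :
  lefts (map inl s1 ++ map inr s2) = s1.
Proof.
by rewrite /lefts pmap_cat (map_pK (g := inl)) //; elim: s2 => [|b s2]; rewrite /= ?cats0.
Qed.

Lemma rights_cat_map (A B : Type) (s1 : seq A) (s2 : seq B) :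
  rights (map inl s1 ++ map inr s2) = s2.
Proof. by rewrite /rights pmap_cat (map_pK (g := inr)) //; elim: s1. Qed.

Section Bridge.
Variables (T1 T2 : finType) (e1 : rel T1) (e2 : rel T2) (v1 : T1) (v2 : T2).
Hypotheses (c1 : connected_graph e1) (c2 : connected_graph e2).
Local Notation G := (bridge_graph e1 e2 v1 v2).

Lemma bridge_paths_stay_left x p : left_of x -> uniq (x :: p) -> path G x p ->
  left_of (last x p) -> all [eta @left_of _ _] p.
Proof.
apply: (path_in_stays (u := inl v1) (u' := inr v2)) => //;
  by case=> a [b|b] //= /andP[/eqP-> /eqP->].
Qed.

Lemma bridge_paths_stay_right x p : right_of x -> uniq (x :: p) -> path G x p ->
  right_of (last x p) -> all [eta @right_of _ _] p.
Proof.
apply: (path_in_stays (u := inr v2) (u' := inl v1)) => //;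
  by case=> a [b|b] //= /andP[/eqP-> /eqP->].
Qed.

Lemma connected_bridge : connected_graph G.
Proof.
have in_left a b : connect G (inl a) (inl b) by apply: (connect_emb (f := inl)).
have in_right a b : connect G (inr a) (inr b) by apply: (connect_emb (f := inr)).
have lr : connect G (inl v1) (inr v2) by apply: connect1; rewrite /= !eqxx.
have rl : connect G (inr v2) (inl v1) by apply: connect1; rewrite /= !eqxx.
case=> [a|a] [b|b] //.
- exact: connect_trans (in_left a v1) (connect_trans lr (in_right v2 b)).
- exact: connect_trans (in_right a v2) (connect_trans rl (in_left v1 b)).
Qed.

Lemma kappa_ext_bridge_ll x a : kappa_ext G (inl x) (inl a) = kappa_ext e1 x a.
Proof.
rewrite /kappa_ext /= (kappa_emb (e' := e1) (g := @left_of _ _)) //.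
- by case.
- exact: bridge_paths_stay_left.
Qed.

Lemma kappa_ext_bridge_rr y b : kappa_ext G (inr y) (inr b) = kappa_ext e2 y b.
Proof.
rewrite /kappa_ext /= (kappa_emb (e' := e2) (g := @right_of _ _)) //.
- by case.
- exact: bridge_paths_stay_right.
Qed.

Lemma kappa_ext_bridge_lr x b : kappa_ext G (inl x) (inr b) = Some 1.
Proof.
rewrite /kappa_ext /= (kappa_cut (S := [eta @left_of _ _]) (u := inl v1) (u' := inr v2)) //.
- by case=> a [c|c] //= /andP[/eqP-> /eqP->].
- exact: connected_bridge.
Qed.

Lemma kappa_ext_bridge_rl y a : kappa_ext G (inr y) (inl a) = Some 1.
Proof.
rewrite /kappa_ext /= (kappa_cut (S := [eta @right_of _ _]) (u := inr v2) (u' := inl v1)) //.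
- by case=> b [c|c] //= /andP[/eqP-> /eqP->].
- exact: connected_bridge.
Qed.

Lemma eq_rep_bridge_ll x y W :
  (rep G (inl x) W == rep G (inl y) W) = (rep e1 x (lefts W) == rep e1 y (lefts W)).
Proof.
elim: W => //= -[a|b] W IH; rewrite /= !eqseq_cons IH.
  by rewrite !kappa_ext_bridge_ll.
by rewrite !kappa_ext_bridge_lr eqxx.
Qed.

Lemma eq_rep_bridge_rr x y W :
  (rep G (inr x) W == rep G (inr y) W) = (rep e2 x (rights W) == rep e2 y (rights W)).
Proof.
elim: W => //= -[a|b] W IH; rewrite /= !eqseq_cons IH.
  by rewrite !kappa_ext_bridge_rl eqxx.
by rewrite !kappa_ext_bridge_rr.
Qed.

Lemma eq_rep_bridge_lr x y W : (rep G (inl x) W == rep G (inr y) W) =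
  all_ones_rep e1 x (lefts W) && all_ones_rep e2 y (rights W).
Proof.
rewrite /all_ones_rep; elim: W => //= -[a|b] W IH; rewrite /= !eqseq_cons IH.
  by rewrite kappa_ext_bridge_ll kappa_ext_bridge_rl andbA.
by rewrite kappa_ext_bridge_lr kappa_ext_bridge_rr eq_sym andbCA.
Qed.

Lemma resolving_bridge_lefts W : resolving G W -> resolving e1 (lefts W).
Proof.
move=> [uW rW]; split; first by apply: (pmap_uniq (g := inl)) => // -[].
by move=> x y /eqP; rewrite -eq_rep_bridge_ll => /eqP /rW [].
Qed.

Lemma resolving_bridge_rights W : resolving G W -> resolving e2 (rights W).
Proof.
move=> [uW rW]; split; first by apply: (pmap_uniq (g := inr)) => // -[].
by move=> x y /eqP; rewrite -eq_rep_bridge_rr => /eqP /rW [].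
Qed.

Lemma resolving_bridge_cat B1 B2 : resolving e1 B1 -> resolving e2 B2 ->
  (forall x y, ~~ (all_ones_rep e1 x B1 && all_ones_rep e2 y B2)) ->
  resolving G (map inl B1 ++ map inr B2).
Proof.
move=> [u1 r1] [u2 r2] no_pair; split.
  rewrite cat_uniq (map_inj_uniq inl_inj) (map_inj_uniq inr_inj) u1 u2 andbT /=.
  by apply/hasPn => _ /mapP[b _ ->]; apply/mapP => -[].
move=> [x|x] [y|y] /eqP.
- by rewrite eq_rep_bridge_ll lefts_cat_map => /eqP /r1 ->.
- by rewrite eq_rep_bridge_lr lefts_cat_map rights_cat_map (negbTE (no_pair x y)).
- by rewrite eq_sym eq_rep_bridge_lr lefts_cat_map rights_cat_map (negbTE (no_pair y x)).
- by rewrite eq_rep_bridge_rr rights_cat_map => /eqP /r2 ->.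
Qed.

Lemma cdim_bridge_ge : cdim e1 + cdim e2 <= cdim G.
Proof.
have [W [rW <-]] := basis_exists G.
rewrite -size_lefts_rights; apply: leq_add; apply: cdim_le_size.
- exact: resolving_bridge_lefts.
- exact: resolving_bridge_rights.
Qed.

Lemma cdim_bridge_gt : forces_all_ones e1 -> forces_all_ones e2 ->
  cdim e1 + cdim e2 < cdim G.
Proof.
move=> f1 f2; rewrite ltnNge; apply/negP => hle.
have [W [rW sW]] := basis_exists G.
have r1 := resolving_bridge_lefts rW; have r2 := resolving_bridge_rights rW.
have sLR : size (lefts W) + size (rights W) = cdim G by rewrite size_lefts_rights.
have l1 : cdim e1 <= size (lefts W) by exact: cdim_le_size.
have l2 : cdim e2 <= size (rights W) by exact: cdim_le_size.
have [x hx] : exists x, rep e1 x (lefts W) = nseq (size (lefts W)) (Some 1).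
  by apply: f1; split=> //; lia.
have [y hy] : exists y, rep e2 y (rights W) = nseq (size (rights W)) (Some 1).
  by apply: f2; split=> //; lia.
suff : inl x = inr y :> T1 + T2 by [].
by apply: rW.2; apply/eqP; rewrite eq_rep_bridge_lr /all_ones_rep hx hy !eqxx.
Qed.

Lemma cdim_bridge_le B1 B2 : resolving e1 B1 -> resolving e2 B2 ->
  (forall x y, ~~ (all_ones_rep e1 x B1 && all_ones_rep e2 y B2)) ->
  cdim G <= size B1 + size B2.
Proof.
move=> r1 r2 no_pair.
rewrite -(size_map (@inl T1 T2) B1) -(size_map (@inr T1 T2) B2) -size_cat.
exact/cdim_le_size/resolving_bridge_cat.
Qed.

Lemma cdim_bridge_le_succ : cdim G <= (cdim e1 + cdim e2).+1.
Proof.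
have [B1 [r1 s1 n1]] := exists_resolving_without_all_ones e1.
have [B2 [r2 s2]] := basis_exists e2.
apply: leq_trans (cdim_bridge_le r1 r2 _) _ => [x y|]; first by rewrite (negbTE (n1 x)).
by rewrite s2 -addSn leq_add2r.
Qed.

Lemma cdim_bridge_le_nonforcing :
  ~ forces_all_ones e1 \/ ~ forces_all_ones e2 -> cdim G <= cdim e1 + cdim e2.
Proof.
case=> [/not_forces_all_ones [B1 [[r1 <-] n1]] | /not_forces_all_ones [B2 [[r2 <-] n2]]].
  have [B2 [r2 <-]] := basis_exists e2.
  by apply: cdim_bridge_le => // x y; rewrite (negbTE (n1 x)).
have [B1 [r1 <-]] := basis_exists e1.
by apply: cdim_bridge_le => // x y; rewrite (negbTE (n2 y)) andbF.
Qed.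

End Bridge.

Theorem mainTheorem11 (T1 T2 : finType) (e1 : rel T1) (e2 : rel T2)
  (v1 : T1) (v2 : T2) :
  simple_graph e1 -> simple_graph e2 ->
  connected_graph e1 -> connected_graph e2 ->
  (forces_all_ones e1 /\ forces_all_ones e2 ->
     cdim (bridge_graph e1 e2 v1 v2) = cdim e1 + cdim e2 + 1) /\
  (~ (forces_all_ones e1 /\ forces_all_ones e2) ->
     cdim (bridge_graph e1 e2 v1 v2) = cdim e1 + cdim e2).
Proof.
move=> _ _ c1 c2; split.
- case=> f1 f2; apply/eqP; rewrite eqn_leq addn1.
  by rewrite cdim_bridge_le_succ // cdim_bridge_gt.
- move=> nf; apply/eqP; rewrite eqn_leq cdim_bridge_ge // andbT.
  by apply: cdim_bridge_le_nonforcing => //; apply: not_and_or.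
Qed.
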